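(* Let $\psi,\varphi$ be metric formulas and $n\in\mathbb{N}$ with $n>0$. Then, with respect to strict timed traces: $$\psi\,\mathsf{U}_{[0,n]}\,\varphi\equiv\varphi\vee\Big(\psi\wedge\bigvee_{i=1}^{n}\circ_{[i,i]}\big(\psi\,\mathsf{U}_{[0,n-i]}\,\varphi\big)\Big),\qquad \psi\,\mathsf{R}_{[0,n]}\,\varphi\equiv\varphi\wedge\Big(\psi\vee\bigwedge_{i=1}^{n}\widehat{\circ}_{[i,i]}\big(\psi\,\mathsf{R}_{[0,n-i]}\,\varphi\big)\Big),$$ and the same holds for the dual past operators, i.e. the equivalences obtained by replacing $\mathsf{U},\mathsf{R},\circ,\widehat{\circ}$ by $\mathsf{S},\mathsf{T},\bullet,\widehat{\bullet}$ respectively.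
   Context: Write $[m,n)=\{i\in\mathbb{N}\mid m\le i<n\}$, $[m,n]=\{i\in\mathbb{N}\mid m\le i\le n\}$, $(m,n]=\{i\in\mathbb{N}\mid m<i\le n\}$. Metric formulas over a set of atoms $\mathcal{A}$: $\varphi::=p\mid\bot\mid\varphi_1\wedge\varphi_2\mid\varphi_1\vee\varphi_2\mid\varphi_1\to\varphi_2\mid\bullet_I\varphi\mid\varphi_1\mathsf{S}_I\varphi_2\mid\varphi_1\mathsf{T}_I\varphi_2\mid\circ_I\varphi\mid\varphi_1\mathsf{U}_I\varphi_2\mid\varphi_1\mathsf{R}_I\varphi_2$, $p\in\mathcal{A}$, $I=[m,n)$, $m\in\mathbb{N}$, $n\in\mathbb{N}\cup\{\omega\}$; a subscript $[m,n]$ with $n\in\mathbb{N}$ abbreviates $[m,n+1)$. Derived: $\neg\varphi:=\varphi\to\bot$, $\top:=\neg\bot$, $\widehat{\bullet}_I\varphi:=\bullet_I\varphi\vee\neg\bullet_I\top$, $\widehat{\circ}_I\varphi:=\circ_I\varphi\vee\neg\circ_I\top$. A timed HT-trace of length $\lambda\in\mathbb{N}\cup\{\omega\}$ is $\mathbf{M}=(\langle\mathbf{H},\mathbf{T}\rangle,\tau)$ with $H_i\subseteq T_i\subseteq\mathcal{A}$ for $i\in[0,\lambda)$, $\tau:[0,\lambda)\to\mathbb{N}$, $\tau(0)=0$, $\tau(i)\le\tau(i+1)$; strict if $\tau(i)<\tau(i+1)$ whenever $i+1<\lambda$. Satisfaction at $k\in[0,\lambda)$: $\bot$ never; $p$ iff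 $p\in H_k$; $\wedge,\vee$ usual; $\varphi\to\psi$ iff for both $\mathbf{M}'=\mathbf{M}$ and $\mathbf{M}'=(\langle\mathbf{T},\mathbf{T}\rangle,\tau)$, $\mathbf{M}',k\not\models\varphi$ or $\mathbf{M}',k\models\psi$; $\bullet_I\varphi$ iff $k>0$, $\mathbf{M},k-1\models\varphi$, $\tau(k)-\tau(k-1)\in I$; $\varphi\mathsf{S}_I\psi$ iff for some $j\in[0,k]$ with $\tau(k)-\tau(j)\in I$, $\mathbf{M},j\models\psi$ and $\mathbf{M},i\models\varphi$ for all $i\in(j,k]$; $\varphi\mathsf{T}_I\psi$ iff for all $j\in[0,k]$ with $\tau(k)-\tau(j)\in I$, $\mathbf{M},j\models\psi$ or $\mathbf{M},i\models\varphi$ for some $i\in(j,k]$; $\circ_I\varphi$ iff $k+1<\lambda$, $\mathbf{M},k+1\models\varphi$, $\tau(k+1)-\tau(k)\in I$; $\varphi\mathsf{U}_I\psi$ iff for some $j\in[k,\lambda)$ with $\tau(j)-\tau(k)\in I$, $\mathbf{M},j\models\psi$ and $\mathbf{M},i\models\varphi$ for all $i\in[k,j)$; $\varphi\mathsf{R}_I\psi$ iff for all $j\in[k,\lambda)$ with $\tau(j)-\tau(k)\in I$, $\mathbf{M},j\models\psi$ or $\mathbf{M},i\models\varphi$ for some $i\in[k,j)$. $\alpha\equiv\beta$ (w.r.t. strict traces) means: for every strict timed HT-trace $\mathbf{M}$ of any length $\lambda$ and every $k\in[0,\lambda)$, $\mathbf{M},k\models\alpha$ iff $\mathbf{M},k\models\beta$.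 *)

From Stdlib Require Import Arith List.
Import ListNotations.
Set Implicit Arguments.

(* Interval [m, n) with n : option nat, None = omega. *)
Inductive formula (A : Type) : Type :=
| Atom : A -> formula A
| Bot : formula A
| And : formula A -> formula A -> formula A
| Or : formula A -> formula A -> formula A
| Impl : formula A -> formula A -> formula A
| Prev : nat -> option nat -> formula A -> formula A
| Since : nat -> option nat -> formula A -> formula A -> formula A
| Trigger : nat -> option nat -> formula A -> formula A -> formula A
| Next : nat -> option nat -> formula A -> formula A
| Until : nat -> option nat -> formula A -> formula A -> formula A
| Release : nat -> option nat -> formula A -> formula A -> formula A.

Arguments Bot {A}.

Definition Neg {A} (f : formula A) : formula A := Impl f Bot.
Definition Top {A} : formula A := Neg Bot.
Definition WNext {A} m n (f : formula A) : formula A := Or (Next m n f) (Neg (Next m n Top)).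
Definition WPrev {A} m n (f : formula A) : formula A := Or (Prev m n f) (Neg (Prev m n Top)).

(* closed interval [m, n] with n a natural number abbreviates [m, n+1) *)
Definition cl (n : nat) : option nat := Some (S n).

Definition bigOr {A} (l : list (formula A)) : formula A := fold_right (@Or A) Bot l.
Definition bigAnd {A} (l : list (formula A)) : formula A := fold_right (@And A) Top l.

(* Timed HT-trace; len = None means length omega. *)
Record trace (A : Type) := mkTrace {
  len : option nat;
  tH : nat -> A -> Prop;
  tT : nat -> A -> Prop;
  tau : nat -> nat
}.

Definition lt_len (l : option nat) (k : nat) : Prop :=
  match l with None => True | Some n => k < n end.

Definition in_int (m : nat) (n : option nat) (d : nat) : Prop :=
  m <= d /\ match n with None => True | Some n => d < n end.

Definition timed_trace {A} (M : trace A) : Prop :=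
  (forall i, lt_len (len M) i -> forall p, tH M i p -> tT M i p) /\
  tau M 0 = 0 /\
  (forall i, lt_len (len M) (S i) -> tau M i <= tau M (S i)).

Definition strict_trace {A} (M : trace A) : Prop :=
  timed_trace M /\ (forall i, lt_len (len M) (S i) -> tau M i < tau M (S i)).

(* sat M w k f: w = false evaluates in <H,T>, w = true in <T,T>. *)
Fixpoint sat {A} (M : trace A) (w : bool) (k : nat) (f : formula A) : Prop :=
  match f with
  | Atom p => if w then tT M k p else tH M k p
  | Bot => False
  | And f1 f2 => sat M w k f1 /\ sat M w k f2
  | Or f1 f2 => sat M w k f1 \/ sat M w k f2
  | Impl f1 f2 => forall w', (w' = w \/ w' = true) -> sat M w' k f1 -> sat M w' k f2
  | Prev m n f1 => 0 < k /\ sat M w (k - 1) f1 /\ in_int m n (tau M k - tau M (k - 1))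
  | Since m n f1 f2 => exists j, j <= k /\ in_int m n (tau M k - tau M j) /\
        sat M w j f2 /\ (forall i, j < i <= k -> sat M w i f1)
  | Trigger m n f1 f2 => forall j, j <= k -> in_int m n (tau M k - tau M j) ->
        sat M w j f2 \/ (exists i, j < i <= k /\ sat M w i f1)
  | Next m n f1 => lt_len (len M) (S k) /\ sat M w (S k) f1 /\ in_int m n (tau M (S k) - tau M k)
  | Until m n f1 f2 => exists j, k <= j /\ lt_len (len M) j /\ in_int m n (tau M j - tau M k) /\
        sat M w j f2 /\ (forall i, k <= i < j -> sat M w i f1)
  | Release m n f1 f2 => forall j, k <= j -> lt_len (len M) j -> in_int m n (tau M j - tau M k) ->
        sat M w j f2 \/ (exists i, k <= i < j /\ sat M w i f1)
  end.

Definition models {A} (M : trace A) (k : nat) (f : formula A) : Prop := sat M false k f.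

Definition equiv_strict {A} (a b : formula A) : Prop :=
  forall M : trace A, strict_trace M -> forall k, lt_len (len M) k ->
    (models M k a <-> models M k b).

Definition idx (n : nat) : list nat := seq 1 n.

(* On a strict trace the step from k to k+1 (or from k-1 to k) takes some time d >= 1.
   Hence [psi U_[0,n] phi] holds at k iff phi holds at k, or psi holds at k, d <= n and
   [psi U_[0,n-d] phi] holds at k+1; of the disjuncts [o_[i,i] (psi U_[0,n-i] phi)],
   i = 1..n, only the one with i = d can hold.  Release is the same with a conjunction
   of weak nexts, and the past operators step back to k-1 instead of forward to k+1. *)

From Pilot Require Import Defs.
From Stdlib Require Import Arith List Lia Classical.

Lemma lt_len_le l a b : a <= b -> lt_len l b -> lt_len l a.
Proof. destruct l; simpl; lia. Qed.

Lemma in_int_point i d : Defs.in_int i (cl i) d <-> d = i.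
Proof. unfold Defs.in_int, cl; lia. Qed.

Lemma in_int_upto n d : Defs.in_int 0 (cl n) d <-> d <= n.
Proof. unfold Defs.in_int, cl; lia. Qed.

Lemma in_map_idx {B} (f : nat -> B) n x :
  In x (map f (idx n)) <-> exists i, 1 <= i <= n /\ x = f i.
Proof.
  unfold idx; rewrite in_map_iff; split.
  - intros [i [<- Hi]]; apply in_seq in Hi; exists i; split; [lia | reflexivity].
  - intros [i [Hi ->]]; exists i; split; [reflexivity | apply in_seq; lia].
Qed.

Lemma tau_le {A} (M : trace A) : timed_trace M ->
  forall a b, a <= b -> lt_len (len M) b -> tau M a <= tau M b.
Proof.
  intros [_ [_ Hstep]] a b Hab; induction Hab as [|b Hab IH]; intros Hb; [lia |].
  specialize (IH (lt_len_le _ _ _ (Nat.le_succ_diag_r b) Hb)).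
  specialize (Hstep b Hb); lia.
Qed.

Lemma strict_step_pos {A} (M : trace A) k : strict_trace M ->
  lt_len (len M) (S k) -> 1 <= tau M (S k) - tau M k.
Proof. intros [_ Hstrict] Hk; specialize (Hstrict k Hk); lia. Qed.

Lemma strict_prev_step_pos {A} (M : trace A) k : strict_trace M ->
  0 < k -> lt_len (len M) k -> 1 <= tau M k - tau M (k - 1).
Proof.
  intros HM Hk0 Hk; destruct k as [|k]; [lia |].
  rewrite Nat.sub_succ, Nat.sub_0_r; exact (strict_step_pos M k HM Hk).
Qed.

Section Semantics.

Variables (A : Type) (M : trace A) (w : bool).

Lemma sat_bigOr k l : sat M w k (bigOr l) <-> exists f, In f l /\ sat M w k f.
Proof.
  induction l as [|g l IH]; simpl.
  - split; [tauto | intros [f [[] _]]].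
  - unfold bigOr in IH; rewrite IH; split.
    + intros [Hg | [f [Hf Hsat]]]; eauto.
    + intros [f [[<- | Hf] Hsat]]; eauto.
Qed.

Lemma sat_bigAnd k l : sat M w k (bigAnd l) <-> forall f, In f l -> sat M w k f.
Proof.
  induction l as [|g l IH]; simpl.
  - split; [intros _ f [] | tauto].
  - unfold bigAnd in IH; rewrite IH; split.
    + intros [Hg Hl] f [<- | Hf]; auto.
    + intros H; split; auto.
Qed.

Lemma sat_Next_point k i f :
  sat M w k (Next i (cl i) f) <->
  lt_len (len M) (S k) /\ tau M (S k) - tau M k = i /\ sat M w (S k) f.
Proof. simpl; rewrite in_int_point; tauto. Qed.

Lemma sat_Prev_point k i f :
  sat M w k (Prev i (cl i) f) <->
  0 < k /\ tau M k - tau M (k - 1) = i /\ sat M w (k - 1) f.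
Proof. simpl; rewrite in_int_point; tauto. Qed.

Lemma sat_WNext_point k i f :
  sat M w k (WNext i (cl i) f) <->
  (lt_len (len M) (S k) -> tau M (S k) - tau M k = i -> sat M w (S k) f).
Proof.
  unfold WNext; simpl; split.
  - intros [[_ [Hf _]] | Hnot] Hk Hi; [exact Hf |].
    exfalso; apply (Hnot w (or_introl eq_refl)).
    split; [exact Hk | split; [intros; contradiction | apply in_int_point; exact Hi]].
  - intros H; destruct (classic (lt_len (len M) (S k) /\ tau M (S k) - tau M k = i)) as [[Hk Hi] | Hnot].
    + left; repeat split; auto; apply in_int_point; exact Hi.
    + right; intros w' _ [Hk [_ Hi]]; apply in_int_point in Hi; tauto.
Qed.

Lemma sat_WPrev_point k i f :
  sat M w k (WPrev i (cl i) f) <->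
  (0 < k -> tau M k - tau M (k - 1) = i -> sat M w (k - 1) f).
Proof.
  unfold WPrev; simpl; split.
  - intros [[_ [Hf _]] | Hnot] Hk Hi; [exact Hf |].
    exfalso; apply (Hnot w (or_introl eq_refl)).
    split; [exact Hk | split; [intros; contradiction | apply in_int_point; exact Hi]].
  - intros H; destruct (classic (0 < k /\ tau M k - tau M (k - 1) = i)) as [[Hk Hi] | Hnot].
    + left; repeat split; auto; apply in_int_point; exact Hi.
    + right; intros w' _ [Hk [_ Hi]]; apply in_int_point in Hi; tauto.
Qed.

Lemma sat_bigOr_Next k n (f : nat -> formula A) :
  sat M w k (bigOr (map (fun i => Next i (cl i) (f i)) (idx n))) <->
  lt_len (len M) (S k) /\ 1 <= tau M (S k) - tau M k <= n /\
  sat M w (S k) (f (tau M (S k) - tau M k)).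
Proof.
  rewrite sat_bigOr; split.
  - intros [g [Hg Hsat]]; apply in_map_idx in Hg as [i [Hi ->]].
    apply sat_Next_point in Hsat as [Hk [<- Hf]]; auto.
  - intros [Hk [Hd Hf]]; eexists; split.
    + apply in_map_idx; eauto.
    + apply sat_Next_point; auto.
Qed.

Lemma sat_bigOr_Prev k n (f : nat -> formula A) :
  sat M w k (bigOr (map (fun i => Prev i (cl i) (f i)) (idx n))) <->
  0 < k /\ 1 <= tau M k - tau M (k - 1) <= n /\
  sat M w (k - 1) (f (tau M k - tau M (k - 1))).
Proof.
  rewrite sat_bigOr; split.
  - intros [g [Hg Hsat]]; apply in_map_idx in Hg as [i [Hi ->]].
    apply sat_Prev_point in Hsat as [Hk [<- Hf]]; auto.
  - intros [Hk [Hd Hf]]; eexists; split.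
    + apply in_map_idx; eauto.
    + apply sat_Prev_point; auto.
Qed.

Lemma sat_bigAnd_WNext k n (f : nat -> formula A) :
  sat M w k (bigAnd (map (fun i => WNext i (cl i) (f i)) (idx n))) <->
  (lt_len (len M) (S k) -> 1 <= tau M (S k) - tau M k <= n ->
   sat M w (S k) (f (tau M (S k) - tau M k))).
Proof.
  rewrite sat_bigAnd; split.
  - intros H Hk Hd; refine (proj1 (sat_WNext_point _ _ _) (H _ _) Hk eq_refl).
    apply in_map_idx; eauto.
  - intros H g Hg; apply in_map_idx in Hg as [i [Hi ->]].
    apply sat_WNext_point; intros Hk <-; auto.
Qed.

Lemma sat_bigAnd_WPrev k n (f : nat -> formula A) :
  sat M w k (bigAnd (map (fun i => WPrev i (cl i) (f i)) (idx n))) <->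
  (0 < k -> 1 <= tau M k - tau M (k - 1) <= n ->
   sat M w (k - 1) (f (tau M k - tau M (k - 1)))).
Proof.
  rewrite sat_bigAnd; split.
  - intros H Hk Hd; refine (proj1 (sat_WPrev_point _ _ _) (H _ _) Hk eq_refl).
    apply in_map_idx; eauto.
  - intros H g Hg; apply in_map_idx in Hg as [i [Hi ->]].
    apply sat_WPrev_point; intros Hk <-; auto.
Qed.

Hypothesis timed : timed_trace M.

Lemma sat_Until_unfold psi phi n k : lt_len (len M) k ->
  sat M w k (Until 0 (cl n) psi phi) <->
  sat M w k phi \/
  (sat M w k psi /\ lt_len (len M) (S k) /\ tau M (S k) - tau M k <= n /\
   sat M w (S k) (Until 0 (cl (n - (tau M (S k) - tau M k))) psi phi)).
Proof.
  intros Hk; simpl; setoid_rewrite in_int_upto; split.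
  - intros [j [Hkj [Hj [Hd [Hphi Hpsi]]]]].
    destruct (Nat.eq_dec j k) as [-> | Hne]; [left; exact Hphi | right].
    assert (HSk : lt_len (len M) (S k)) by (apply (lt_len_le _ _ j); [lia | exact Hj]).
    pose proof (tau_le M timed k (S k) (Nat.le_succ_diag_r k) HSk).
    pose proof (tau_le M timed (S k) j ltac:(lia) Hj).
    split; [apply Hpsi; lia | split; [exact HSk | split; [lia |]]].
    exists j; repeat split; auto; try lia.
    intros i Hi; apply Hpsi; lia.
  - intros [Hphi | [Hpsi [HSk [Hd [j [Hkj [Hj [Hdj [Hphi Hpsi']]]]]]]]].
    + exists k; repeat split; auto; lia.
    + pose proof (tau_le M timed k (S k) (Nat.le_succ_diag_r k) HSk).
      pose proof (tau_le M timed (S k) j Hkj Hj).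
      exists j; repeat split; auto; try lia.
      intros i Hi; destruct (Nat.eq_dec i k) as [-> | Hne]; [exact Hpsi | apply Hpsi'; lia].
Qed.

Lemma sat_Release_unfold psi phi n k : lt_len (len M) k ->
  sat M w k (Release 0 (cl n) psi phi) <->
  sat M w k phi /\
  (sat M w k psi \/
   (lt_len (len M) (S k) -> tau M (S k) - tau M k <= n ->
    sat M w (S k) (Release 0 (cl (n - (tau M (S k) - tau M k))) psi phi))).
Proof.
  intros Hk; simpl; setoid_rewrite in_int_upto; split.
  - intros H; split.
    { destruct (H k (le_n k) Hk ltac:(lia)) as [Hphi | [i [Hi _]]]; [exact Hphi | lia]. }
    destruct (classic (sat M w k psi)) as [Hpsi | Hnpsi]; [left; exact Hpsi | right].
    intros HSk Hd j Hkj Hj Hdj.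
    pose proof (tau_le M timed k (S k) (Nat.le_succ_diag_r k) HSk).
    pose proof (tau_le M timed (S k) j Hkj Hj).
    destruct (H j ltac:(lia) Hj ltac:(lia)) as [Hphi | [i [Hi Hpsi]]]; [left; exact Hphi | right].
    exists i; split; [| exact Hpsi].
    destruct (Nat.eq_dec i k) as [-> | Hne]; [contradiction | lia].
  - intros [Hphi Hstep] j Hkj Hj Hd.
    destruct (Nat.eq_dec j k) as [-> | Hne]; [left; exact Hphi |].
    destruct Hstep as [Hpsi | Hnext]; [right; exists k; split; [lia | exact Hpsi] |].
    assert (HSk : lt_len (len M) (S k)) by (apply (lt_len_le _ _ j); [lia | exact Hj]).
    pose proof (tau_le M timed k (S k) (Nat.le_succ_diag_r k) HSk).
    pose proof (tau_le M timed (S k) j ltac:(lia) Hj).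
    destruct (Hnext HSk ltac:(lia) j ltac:(lia) Hj ltac:(lia)) as [Hphi' | [i [Hi Hpsi]]];
      [left; exact Hphi' | right; exists i; split; [lia | exact Hpsi]].
Qed.

Lemma sat_Since_unfold psi phi n k : lt_len (len M) k ->
  sat M w k (Since 0 (cl n) psi phi) <->
  sat M w k phi \/
  (sat M w k psi /\ 0 < k /\ tau M k - tau M (k - 1) <= n /\
   sat M w (k - 1) (Since 0 (cl (n - (tau M k - tau M (k - 1)))) psi phi)).
Proof.
  intros Hk; simpl; setoid_rewrite in_int_upto.
  pose proof (tau_le M timed (k - 1) k (Nat.le_sub_l k 1) Hk) as Hlast.
  assert (Hpred : forall j, j <= k - 1 -> tau M j <= tau M (k - 1))
    by (intros j Hj; exact (tau_le M timed j (k - 1) Hj (lt_len_le _ _ _ (Nat.le_sub_l k 1) Hk))).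
  split.
  - intros [j [Hjk [Hd [Hphi Hpsi]]]].
    destruct (Nat.eq_dec j k) as [-> | Hne]; [left; exact Hphi | right].
    pose proof (Hpred j ltac:(lia)).
    split; [apply Hpsi; lia | split; [lia | split; [lia |]]].
    exists j; repeat split; auto; try lia.
    intros i Hi; apply Hpsi; lia.
  - intros [Hphi | [Hpsi [Hk0 [Hd [j [Hjk [Hdj [Hphi Hpsi']]]]]]]].
    + exists k; repeat split; auto; lia.
    + pose proof (Hpred j Hjk).
      exists j; repeat split; auto; try lia.
      intros i Hi; destruct (Nat.eq_dec i k) as [-> | Hne]; [exact Hpsi | apply Hpsi'; lia].
Qed.

Lemma sat_Trigger_unfold psi phi n k : lt_len (len M) k ->
  sat M w k (Trigger 0 (cl n) psi phi) <->
  sat M w k phi /\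
  (sat M w k psi \/
   (0 < k -> tau M k - tau M (k - 1) <= n ->
    sat M w (k - 1) (Trigger 0 (cl (n - (tau M k - tau M (k - 1)))) psi phi))).
Proof.
  intros Hk; simpl; setoid_rewrite in_int_upto.
  pose proof (tau_le M timed (k - 1) k (Nat.le_sub_l k 1) Hk) as Hlast.
  assert (Hpred : forall j, j <= k - 1 -> tau M j <= tau M (k - 1))
    by (intros j Hj; exact (tau_le M timed j (k - 1) Hj (lt_len_le _ _ _ (Nat.le_sub_l k 1) Hk))).
  split.
  - intros H; split.
    { destruct (H k (le_n k) ltac:(lia)) as [Hphi | [i [Hi _]]]; [exact Hphi | lia]. }
    destruct (classic (sat M w k psi)) as [Hpsi | Hnpsi]; [left; exact Hpsi | right].
    intros Hk0 Hd j Hjk Hdj.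
    pose proof (Hpred j Hjk).
    destruct (H j ltac:(lia) ltac:(lia)) as [Hphi | [i [Hi Hpsi]]]; [left; exact Hphi | right].
    exists i; split; [| exact Hpsi].
    destruct (Nat.eq_dec i k) as [-> | Hne]; [contradiction | lia].
  - intros [Hphi Hstep] j Hjk Hd.
    destruct (Nat.eq_dec j k) as [-> | Hne]; [left; exact Hphi |].
    destruct Hstep as [Hpsi | Hprev]; [right; exists k; split; [lia | exact Hpsi] |].
    pose proof (Hpred j ltac:(lia)).
    destruct (Hprev ltac:(lia) ltac:(lia) j ltac:(lia) ltac:(lia)) as [Hphi' | [i [Hi Hpsi]]];
      [left; exact Hphi' | right; exists i; split; [lia | exact Hpsi]].
Qed.

End Semantics.

Lemma Until_expansion {A} (psi phi : formula A) n :
  equiv_strict (Until 0 (cl n) psi phi)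
    (Or phi (And psi (bigOr (map (fun i => Next i (cl i) (Until 0 (cl (n - i)) psi phi)) (idx n))))).
Proof.
  intros M HM k Hk; unfold models.
  change (sat M false k (Or ?a (And ?b ?c)))
    with (sat M false k a \/ (sat M false k b /\ sat M false k c)).
  rewrite sat_Until_unfold, sat_bigOr_Next by (exact (proj1 HM) || exact Hk).
  pose proof (strict_step_pos M k HM); intuition lia.
Qed.

Lemma Release_expansion {A} (psi phi : formula A) n :
  equiv_strict (Release 0 (cl n) psi phi)
    (And phi (Or psi (bigAnd (map (fun i => WNext i (cl i) (Release 0 (cl (n - i)) psi phi)) (idx n))))).
Proof.
  intros M HM k Hk; unfold models.
  change (sat M false k (And ?a (Or ?b ?c)))
    with (sat M false k a /\ (sat M false k b \/ sat M false k c)).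
  rewrite sat_Release_unfold, sat_bigAnd_WNext by (exact (proj1 HM) || exact Hk).
  pose proof (strict_step_pos M k HM); intuition lia.
Qed.

Lemma Since_expansion {A} (psi phi : formula A) n :
  equiv_strict (Since 0 (cl n) psi phi)
    (Or phi (And psi (bigOr (map (fun i => Prev i (cl i) (Since 0 (cl (n - i)) psi phi)) (idx n))))).
Proof.
  intros M HM k Hk; unfold models.
  change (sat M false k (Or ?a (And ?b ?c)))
    with (sat M false k a \/ (sat M false k b /\ sat M false k c)).
  rewrite sat_Since_unfold, sat_bigOr_Prev by (exact (proj1 HM) || exact Hk).
  pose proof (fun Hk0 => strict_prev_step_pos M k HM Hk0 Hk); intuition lia.
Qed.

Lemma Trigger_expansion {A} (psi phi : formula A) n :
  equiv_strict (Trigger 0 (cl n) psi phi)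
    (And phi (Or psi (bigAnd (map (fun i => WPrev i (cl i) (Trigger 0 (cl (n - i)) psi phi)) (idx n))))).
Proof.
  intros M HM k Hk; unfold models.
  change (sat M false k (And ?a (Or ?b ?c)))
    with (sat M false k a /\ (sat M false k b \/ sat M false k c)).
  rewrite sat_Trigger_unfold, sat_bigAnd_WPrev by (exact (proj1 HM) || exact Hk).
  pose proof (fun Hk0 => strict_prev_step_pos M k HM Hk0 Hk); intuition lia.
Qed.

Theorem lemma3 (A : Type) (psi phi : formula A) (n : nat) (Hn : 0 < n) :
  equiv_strict (Until 0 (cl n) psi phi)
    (Or phi (And psi (bigOr (map (fun i => Next i (cl i) (Until 0 (cl (n - i)) psi phi)) (idx n)))))
  /\ equiv_strict (Release 0 (cl n) psi phi)
    (And phi (Or psi (bigAnd (map (fun i => WNext i (cl i) (Release 0 (cl (n - i)) psi phi)) (idx n)))))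
  /\ equiv_strict (Since 0 (cl n) psi phi)
    (Or phi (And psi (bigOr (map (fun i => Prev i (cl i) (Since 0 (cl (n - i)) psi phi)) (idx n)))))
  /\ equiv_strict (Trigger 0 (cl n) psi phi)
    (And phi (Or psi (bigAnd (map (fun i => WPrev i (cl i) (Trigger 0 (cl (n - i)) psi phi)) (idx n))))).
Proof.
  split; [| split; [| split]].
  - apply Until_expansion.
  - apply Release_expansion.
  - apply Since_expansion.
  - apply Trigger_expansion.
Qed.
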